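(* Let $\mathcal C$ be a category, $I:\mathcal B\to\mathcal C$ the inclusion of a full subcategory with a left adjoint $S:\mathcal C\to\mathcal B$, with unit $\alpha:1_{\mathcal C}\to IS$ and counit $\beta:SI\xrightarrow{\cong}1_{\mathcal B}$, and $J:\mathcal D\to\mathcal C$ the inclusion of a full subcategory with a right adjoint $T:\mathcal C\to\mathcal D$, with unit $\delta:1_{\mathcal D}\xrightarrow{\cong}TJ$ and counit $\epsilon:JT\to1_{\mathcal C}$. Suppose that the natural transformations $IS\epsilon:ISJT\to IS$ and $JT\alpha:JT\to JTIS$ are isomorphisms. Then the endofunctor $JT:\mathcal C\to\mathcal C$ is left adjoint to the endofunctor $IS:\mathcal C\to\mathcal C$. *)

(* Hom-sets are types, equality of morphisms is
   Leibniz equality. *)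
Set Implicit Arguments.
Unset Strict Implicit.

Record Category := {
  Ob :> Type;
  Hom : Ob -> Ob -> Type;
  idm : forall x, Hom x x;
  comp : forall x y z, Hom y z -> Hom x y -> Hom x z;
  comp_id_l : forall x y (f : Hom x y), comp (idm y) f = f;
  comp_id_r : forall x y (f : Hom x y), comp f (idm x) = f;
  comp_assoc : forall x y z w (f : Hom x y) (g : Hom y z) (h : Hom z w),
      comp h (comp g f) = comp (comp h g) f
}.
Arguments Hom {c} _ _.
Arguments idm {c} _.
Arguments comp {c x y z} _ _.

Record Functor (C D : Category) := {
  fobj :> C -> D;
  fmap : forall x y, Hom x y -> Hom (fobj x) (fobj y);
  fmap_id : forall x, fmap (idm x) = idm (fobj x);
  fmap_comp : forall x y z (f : Hom x y) (g : Hom y z),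
      fmap (comp g f) = comp (fmap g) (fmap f)
}.
Arguments fmap {C D} f {x y} _ : rename.

Definition FunctorComp (C D E : Category) (G : Functor D E) (F : Functor C D)
  : Functor C E.
Proof.
  refine {| fobj := fun x => G (F x);
            fmap := fun x y f => fmap G (fmap F f) |}.
  - intros x. rewrite !fmap_id. reflexivity.
  - intros x y z f g. rewrite !fmap_comp. reflexivity.
Defined.

Definition is_iso (C : Category) (x y : C) (f : Hom x y) : Prop :=
  exists g : Hom y x, comp g f = idm x /\ comp f g = idm y.

Definition FullSub (C : Category) (P : C -> Prop) : Category.
Proof.
  refine {| Ob := { x : C | P x };
            Hom := fun a b => @Hom C (proj1_sig a) (proj1_sig b);
            idm := fun a => idm (proj1_sig a);
            comp := fun a b c g f => comp g f |}.
  - intros; apply comp_id_l.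
  - intros; apply comp_id_r.
  - intros; apply comp_assoc.
Defined.

Arguments FullSub : clear implicits.

Definition Incl (C : Category) (P : C -> Prop) : Functor (FullSub C P) C.
Proof.
  refine {| fobj := fun a : FullSub C P => proj1_sig a;
            fmap := fun (a b : FullSub C P) (f : Hom a b) => f |}.
  - reflexivity.
  - reflexivity.
Defined.

Arguments Incl : clear implicits.

Record Adjunction (C D : Category) (F : Functor C D) (G : Functor D C) := {
  unit : forall x : C, Hom x (G (F x));
  counit : forall y : D, Hom (F (G y)) y;
  unit_nat : forall x x' (f : Hom x x'),
      comp (unit x') f = comp (fmap G (fmap F f)) (unit x);
  counit_nat : forall y y' (g : Hom y y'),
      comp g (counit y) = comp (counit y') (fmap F (fmap G g));
  triangle_F : forall x : C, comp (counit (F x)) (fmap F (unit x)) = idm (F x);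
  triangle_G : forall y : D, comp (fmap G (counit y)) (unit (G y)) = idm (G y)
}.
Arguments unit {C D F G} _ _.
Arguments counit {C D F G} _ _.

(* Write alpha, beta, delta, epsilon for the unit and counit of S -| I and
   J -| T.  The candidate unit and counit of JT -| IS are
     eta_X   := (IS epsilon_X)^-1 o alpha_X : X -> ISJT X,
     theta_Y := epsilon_Y o (JT alpha_Y)^-1 : JTIS Y -> Y.
   Naturality of the inverses gives naturality of eta and theta.  For the
   triangle identities, naturality of alpha at epsilon_X shows
   eta_X o epsilon_X = alpha_(JT X), so the triangle identity of J -| T
   rewrites T eta_X as T alpha_(JT X) o delta_(T X); the inverse of
   JT alpha then cancels and what remains is the other triangle identity of
   J -| T.  The second triangle identity is dual. *)

From Stdlib Require Import IndefiniteDescription.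

Section Isomorphisms.

Context {C : Category}.

Definition iso_inv {x y : C} {f : Hom x y} (H : is_iso f) : Hom y x :=
  proj1_sig (constructive_indefinite_description _ H).

Lemma iso_inv_l {x y : C} {f : Hom x y} (H : is_iso f) :
  comp (iso_inv H) f = idm x.
Proof. exact (proj1 (proj2_sig (constructive_indefinite_description _ H))). Qed.

Lemma iso_inv_r {x y : C} {f : Hom x y} (H : is_iso f) :
  comp f (iso_inv H) = idm y.
Proof. exact (proj2 (proj2_sig (constructive_indefinite_description _ H))). Qed.

Lemma iso_inv_natural {x y x' y' : C} {u : Hom x y} {u' : Hom x' y'}
  (Hu : is_iso u) (Hu' : is_iso u') (a : Hom x x') (b : Hom y y') :
  comp u' a = comp b u -> comp (iso_inv Hu') b = comp a (iso_inv Hu).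
Proof.
  intros Hsq.
  rewrite <- (comp_id_r (comp (iso_inv Hu') b)), <- (iso_inv_r Hu).
  rewrite comp_assoc, <- (comp_assoc u b), <- Hsq, comp_assoc.
  rewrite iso_inv_l, comp_id_l. reflexivity.
Qed.

End Isomorphisms.

Lemma fmap_comp_FullSub {D C : Category} {P : C -> Prop} (F : Functor D (FullSub C P))
  (x y z : D) (f : Hom x y) (g : Hom y z) :
  fmap F (comp g f) = comp (c := C) (fmap F g) (fmap F f).
Proof. apply fmap_comp. Qed.

Section ReflectiveCoreflective.

Context {C : Category} {PB PD : C -> Prop}.
Context {S : Functor C (FullSub C PB)} {T : Functor C (FullSub C PD)}.
Context {adjS : Adjunction S (Incl C PB)} {adjT : Adjunction (Incl C PD) T}.
Hypothesis hISeps : forall X : C,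
  is_iso (fmap (Incl C PB) (fmap S (counit adjT X))).
Hypothesis hJTalpha : forall X : C,
  is_iso (fmap (Incl C PD) (fmap T (unit adjS X))).

Local Notation IS := (FunctorComp (Incl C PB) S).
Local Notation JT := (FunctorComp (Incl C PD) T).

Definition eta (X : C) : Hom X (IS (JT X)) :=
  comp (iso_inv (hISeps X)) (unit adjS X).

Definition theta (Y : C) : Hom (JT (IS Y)) Y :=
  comp (counit adjT Y) (iso_inv (hJTalpha Y)).

Lemma eta_nat (X X' : C) (f : Hom X X') :
  comp (eta X') f = comp (fmap IS (fmap JT f)) (eta X).
Proof.
  unfold eta. cbn.
  rewrite <- comp_assoc, (unit_nat adjS), !comp_assoc. f_equal.
  apply iso_inv_natural. cbn.
  rewrite <- !(fmap_comp_FullSub S). f_equal. symmetry. apply (counit_nat adjT).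
Qed.

Lemma theta_nat (Y Y' : C) (g : Hom Y Y') :
  comp g (theta Y) = comp (theta Y') (fmap JT (fmap IS g)).
Proof.
  unfold theta. cbn.
  rewrite <- !comp_assoc, (iso_inv_natural (hJTalpha Y) (hJTalpha Y') (fmap T g)).
  - rewrite !comp_assoc. f_equal. apply (counit_nat adjT).
  - cbn. rewrite <- !(fmap_comp_FullSub T). f_equal. apply (unit_nat adjS).
Qed.

Lemma eta_comp_counit (X : C) :
  comp (eta X) (counit adjT X) = unit adjS (JT X).
Proof.
  unfold eta.
  rewrite <- comp_assoc, (unit_nat adjS), comp_assoc.
  rewrite (iso_inv_l (hISeps X)), comp_id_l. reflexivity.
Qed.

Lemma unit_comp_theta (Y : C) :
  comp (unit adjS Y) (theta Y) = counit adjT (IS Y).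
Proof.
  unfold theta.
  rewrite comp_assoc, (counit_nat adjT), <- comp_assoc.
  rewrite (iso_inv_r (hJTalpha Y)), comp_id_r. reflexivity.
Qed.

Lemma fmap_JT_eta (X : C) :
  fmap JT (eta X) = comp (c := C) (fmap T (unit adjS (JT X))) (unit adjT (T X)).
Proof.
  rewrite <- eta_comp_counit. cbn. rewrite (fmap_comp_FullSub T), <- comp_assoc.
  pose proof (triangle_G adjT X) as triangle. cbn in triangle |- *.
  rewrite triangle, comp_id_r. reflexivity.
Qed.

Lemma fmap_IS_theta (Y : C) :
  fmap IS (theta Y) = comp (c := C) (counit adjS (S Y)) (fmap S (counit adjT (IS Y))).
Proof.
  rewrite <- unit_comp_theta. cbn. rewrite (fmap_comp_FullSub S), comp_assoc.
  pose proof (triangle_F adjS Y) as triangle. cbn in triangle |- *.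
  rewrite triangle, comp_id_l. reflexivity.
Qed.

Lemma triangle_JT (X : C) :
  comp (theta (JT X)) (fmap JT (eta X)) = idm (JT X).
Proof.
  rewrite fmap_JT_eta. unfold theta. cbn.
  rewrite <- comp_assoc, (comp_assoc _ _ (iso_inv _)), iso_inv_l, comp_id_l.
  apply (triangle_F adjT).
Qed.

Lemma triangle_IS (Y : C) :
  comp (fmap IS (theta Y)) (eta (IS Y)) = idm (IS Y).
Proof.
  rewrite fmap_IS_theta. unfold eta. cbn.
  rewrite <- !comp_assoc, (comp_assoc _ (iso_inv _)), iso_inv_r, comp_id_l.
  apply (triangle_G adjS).
Qed.

Definition JT_IS_adjunction : Adjunction JT IS :=
  {| unit := eta; counit := theta;
     unit_nat := eta_nat; counit_nat := theta_nat;
     triangle_F := triangle_JT; triangle_G := triangle_IS |}.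

End ReflectiveCoreflective.

Theorem theoremA3 (C : Category) (PB PD : C -> Prop)
  (S : Functor C (FullSub C PB)) (T : Functor C (FullSub C PD))
  (adjS : Adjunction S (Incl C PB))   (* S -| I, unit alpha, counit beta *)
  (adjT : Adjunction (Incl C PD) T)   (* J -| T, unit delta, counit epsilon *)
  (hISeps : forall X : C,
      is_iso (fmap (Incl C PB) (fmap S (counit adjT X))))
  (hJTalpha : forall X : C,
      is_iso (fmap (Incl C PD) (fmap T (unit adjS X)))) :
  inhabited (Adjunction (FunctorComp (Incl C PD) T) (FunctorComp (Incl C PB) S)).
Proof. exact (inhabits (JT_IS_adjunction hISeps hJTalpha)). Qed.
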